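(* Let $\mathcal{K}$ be a consistent statistical $\mathcal{ALC}$ knowledge base and $C, D$ $\mathcal{ALC}$ concepts. Then: (1) for all rationals $0 \le \ell \le u \le 1$: $\mathcal{K} \models_l (C \mid D)[\ell,u]$ iff $\{\kappa \in \mathcal{K} \mid \kappa \rightleftharpoons^* (C \mid D)[\ell,u]\} \models_l (C \mid D)[\ell,u]$; (2) for all $m, M$: $\mathcal{K} \models_p (C \mid D)[m,M]$ iff $\{\kappa \in \mathcal{K} \mid \kappa \rightleftharpoons^* (C \mid D)\} \models_p (C \mid D)[m,M]$.
   Context: $\mathcal{ALC}$ concepts over disjoint sets $N_C$, $N_R$: $C ::= \top \mid A \mid \neg C \mid C \sqcap C \mid \exists r.C$, standard semantics. Interpretations $\mathcal{I} = (\Delta^{\mathcal{I}}, \cdot^{\mathcal{I}})$ have non-empty finite domain; $[X]^{\mathcal{I}} := |X^{\mathcal{I}}|$. A conditional is $(C \mid D)[\ell,u]$ with concepts $C,D$ and rationals $0 \le \ell \le u \le 1$; $\mathcal{I} \models (C \mid D)[\ell,u]$ iff $[D]^{\mathcal{I}} = 0$ or $[C \sqcap D]^{\mathcal{I}}/[D]^{\mathcal{I}} \in [\ell,u]$. A statistical $\mathcal{ALC}$ knowledge base $\mathcal{K}$ is a finite set of conditionals; $\mathrm{Mod}(\mathcal{K})$ is its set of finite models; consistent means $\mathrm{Mod}(\mathcal{K}) \ne \emptyset$. $\mathcal{K} \models_l (C\mid D)[\ell,u]$ iff every model of $\mathcal{K}$ satisfies $(C\mid D)[\ell,u]$. A query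 is an expression $(C \mid D)$. $\mathcal{K} \models_p (C \mid D)[m,M]$ means: some $\mathcal{I} \in \mathrm{Mod}(\mathcal{K})$ has $[D]^{\mathcal{I}} > 0$, and $m$, $M$ are respectively the infimum and supremum of $[C \sqcap D]^{\mathcal{I}}/[D]^{\mathcal{I}}$ over all $\mathcal{I} \in \mathrm{Mod}(\mathcal{K})$ with $[D]^{\mathcal{I}} > 0$. For a concept $C$, $\mathrm{Sig}(C)$ is the set of concept and role names occurring in $C$; the signature of a conditional $(C\mid D)[\ell,u]$ or a query $(C \mid D)$ is $\mathrm{Sig}(C) \cup \mathrm{Sig}(D)$. Two conditionals/queries are directly connected ($\rightleftharpoons$) iff their signatures intersect; $\rightleftharpoons^*$ is the transitive closure of $\rightleftharpoons$ (taken over the conditionals of $\mathcal{K}$ together with the given conditional or query), so $\kappa \rightleftharpoons^* q$ means there is a chain from $\kappa$ to $q$ of consecutive directly connected elements. *)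

From Stdlib Require Import Reals QArith Qreals List.
From mathcomp Require Import all_boot.

Set Implicit Arguments.
Unset Strict Implicit.
Unset Printing Implicit Defensive.

Inductive concept (NC NR : Type) : Type :=
| CTop : concept NC NR
| CAtom : NC -> concept NC NR
| CNeg : concept NC NR -> concept NC NR
| CAnd : concept NC NR -> concept NC NR -> concept NC NR
| CEx : NR -> concept NC NR -> concept NC NR.

Arguments CTop {NC NR}.

Fixpoint Sig (NC NR : Type) (C : concept NC NR) : list (NC + NR) :=
  match C with
  | CTop => nil
  | CAtom A => inl A :: nil
  | CNeg C1 => Sig C1
  | CAnd C1 C2 => Sig C1 ++ Sig C2
  | CEx r C1 => inr r :: Sig C1
  end.

(* Interpretation over a finite domain T (non-emptiness imposed separately) *)
Record interp (NC NR : Type) (T : finType) := Interp {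
  cI : NC -> pred T;
  rI : NR -> rel T }.

Fixpoint ext (NC NR : Type) (T : finType) (I : interp NC NR T) (C : concept NC NR) : pred T :=
  match C with
  | CTop => fun _ => true
  | CAtom A => cI I A
  | CNeg C1 => fun x => ~~ ext I C1 x
  | CAnd C1 C2 => fun x => ext I C1 x && ext I C2 x
  | CEx r C1 => fun x => [exists y, rI I r x y && ext I C1 y]
  end.

Definition card_ext (NC NR : Type) (T : finType) (I : interp NC NR T) (C : concept NC NR) : nat :=
  #|[set x | ext I C x]|.

Definition ratio (NC NR : Type) (T : finType) (I : interp NC NR T) (C D : concept NC NR) : R :=
  Rdiv (INR (card_ext I (CAnd C D))) (INR (card_ext I D)).

Record cond (NC NR : Type) := Cond {
  ccon : concept NC NR;
  cpre : concept NC NR;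
  clo : Q;
  cup : Q }.

Definition wf_cond (NC NR : Type) (k : cond NC NR) : Prop :=
  Qle 0 (clo k) /\ Qle (clo k) (cup k) /\ Qle (cup k) 1.

Definition sat (NC NR : Type) (T : finType) (I : interp NC NR T) (k : cond NC NR) : Prop :=
  card_ext I (cpre k) = 0%N \/
  Rle (Q2R (clo k)) (ratio I (ccon k) (cpre k)) /\ Rle (ratio I (ccon k) (cpre k)) (Q2R (cup k)).

(* A knowledge base given as a (finite) set of conditionals, represented by a
   membership predicate; a finite model has a nonempty finite domain. *)
Definition is_model (NC NR : Type) (P : cond NC NR -> Prop) (T : finType) (I : interp NC NR T) : Prop :=
  (0 < #|T|)%N /\ forall k, P k -> sat I k.

Definition KB_pred (NC NR : Type) (K : list (cond NC NR)) : cond NC NR -> Prop :=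
  fun k => In k K.

Definition consistent (NC NR : Type) (K : list (cond NC NR)) : Prop :=
  exists (T : finType) (I : interp NC NR T), is_model (KB_pred K) I.

Definition entails_l (NC NR : Type) (P : cond NC NR -> Prop) (k : cond NC NR) : Prop :=
  forall (T : finType) (I : interp NC NR T), is_model P I -> sat I k.

Definition is_glb (E : R -> Prop) (m : R) : Prop :=
  (forall x, E x -> (Rle m x)) /\ (forall b, (forall x, E x -> (Rle b x)) -> (Rle b m)).

Definition is_sup (E : R -> Prop) (M : R) : Prop :=
  (forall x, E x -> (Rle x M)) /\ (forall b, (forall x, E x -> (Rle x b)) -> (Rle M b)).

Definition ratios (NC NR : Type) (P : cond NC NR -> Prop) (C D : concept NC NR) : R -> Prop :=
  fun r => exists (T : finType) (I : interp NC NR T),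
      is_model P I /\ (0 < card_ext I D)%N /\ r = ratio I C D.

Definition entails_p (NC NR : Type) (P : cond NC NR -> Prop) (C D : concept NC NR) (m M : R) : Prop :=
  (exists (T : finType) (I : interp NC NR T), is_model P I /\ (0 < card_ext I D)%N) /\
  is_glb (ratios P C D) m /\ is_sup (ratios P C D) M.

Definition meets (NC NR : Type) (s1 s2 : list (NC + NR)) : Prop :=
  exists x, In x s1 /\ In x s2.

Definition csig (NC NR : Type) (k : cond NC NR) : list (NC + NR) :=
  Sig (ccon k) ++ Sig (cpre k).

(* conn K s k : k ⇌* q where q has signature s, via a chain of directly
   connected elements taken from K ∪ {q}. *)
Inductive conn (NC NR : Type) (K : list (cond NC NR)) (s : list (NC + NR)) : cond NC NR -> Prop :=
| conn_base : forall k, In k K -> meets (csig k) s -> conn K s k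
| conn_step : forall k k', In k K -> In k' K -> meets (csig k) (csig k') ->
                conn K s k' -> conn K s k.

Definition relevant (NC NR : Type) (K : list (cond NC NR)) (s : list (NC + NR)) : cond NC NR -> Prop :=
  fun k => In k K /\ conn K s k.

(** Glue a model [I] of the relevant part of [K] to an arbitrary model [J] of
    [K] (which exists by consistency): on the domain [T1 * T2], the symbols
    occurring in the query or in relevant conditionals are read off [I] in the
    first coordinate and all other symbols off [J] in the second.  A concept
    over the first kind of symbols then denotes [ext I X * T2], one over the
    second kind [T1 * ext J X], so every conditional of [K] keeps its ratio and
    the glued interpretation is a model of [K] with the same ratio for the
    query as [I]. *)

From Stdlib Require Import Reals QArith Qreals List.
From mathcomp Require Import all_boot.
From Stdlib Require Import ClassicalEpsilon Classical.

Set Implicit Arguments.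
Unset Strict Implicit.
Unset Printing Implicit Defensive.

Section ProductInterpretation.
Variables (NC NR : Type) (Sym : NC + NR -> Prop) (T1 T2 : finType)
  (I : interp NC NR T1) (J : interp NC NR T2).

Definition prod_interp : interp NC NR (T1 * T2)%type :=
  {| cI := fun A p => if excluded_middle_informative (Sym (inl A))
                      then cI I A p.1 else cI J A p.2;
     rI := fun r p q => if excluded_middle_informative (Sym (inr r))
                        then rI I r p.1 q.1 && (p.2 == q.2)
                        else rI J r p.2 q.2 && (p.1 == q.1) |}.

Lemma ext_prod_interp_l (X : concept NC NR) :
  (forall s, In s (Sig X) -> Sym s) -> forall p, ext prod_interp X p = ext I X p.1.
Proof.
elim: X => [|A|X IH|X IH Y IH2|r X IH] /= HX p //.
- by case: excluded_middle_informative => // h; case: h; apply: HX; left.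
- by rewrite IH.
- by rewrite IH ?IH2 // => s Hs; apply: HX; apply: in_or_app; tauto.
- case: excluded_middle_informative => [Hsym|h]; last by case: h; apply: HX; left.
  have IHX := IH (fun s Hs => HX s (or_intror Hs)).
  apply/existsP/existsP => [[q /andP [/andP [Hr _] Hq]]|[y /andP [Hr Hy]]].
  + by exists q.1; rewrite Hr -IHX.
  + by exists (y, p.2); rewrite /= Hr eqxx IHX.
Qed.

Lemma ext_prod_interp_r (X : concept NC NR) :
  (forall s, In s (Sig X) -> ~ Sym s) -> forall p, ext prod_interp X p = ext J X p.2.
Proof.
elim: X => [|A|X IH|X IH Y IH2|r X IH] /= HX p //.
- by case: excluded_middle_informative => // h; case: (HX (inl A)) => //; left.
- by rewrite IH.
- by rewrite IH ?IH2 // => s Hs; apply: HX; apply: in_or_app; tauto.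
- case: excluded_middle_informative => [h|Hsym]; first by case: (HX (inr r)) => //; left.
  have IHX := IH (fun s Hs => HX s (or_intror Hs)).
  apply/existsP/existsP => [[q /andP [/andP [Hr _] Hq]]|[y /andP [Hr Hy]]].
  + by exists q.2; rewrite Hr -IHX.
  + by exists (p.1, y); rewrite /= Hr eqxx IHX.
Qed.

Lemma card_ext_prod_interp_l (X : concept NC NR) :
  (forall s, In s (Sig X) -> Sym s) -> card_ext prod_interp X = (card_ext I X * #|T2|)%N.
Proof.
move=> HX; rewrite /card_ext -cardsT -cardsX.
have -> : [set p | ext prod_interp X p] = setX [set x | ext I X x] [set: T2] => //.
by apply/setP => p; rewrite !inE ext_prod_interp_l // andbT.
Qed.

Lemma card_ext_prod_interp_r (X : concept NC NR) :
  (forall s, In s (Sig X) -> ~ Sym s) -> card_ext prod_interp X = (card_ext J X * #|T1|)%N.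
Proof.
move=> HX; rewrite /card_ext mulnC -cardsT -cardsX.
have -> : [set p | ext prod_interp X p] = setX [set: T1] [set x | ext J X x] => //.
by apply/setP => p; rewrite !inE ext_prod_interp_r.
Qed.

End ProductInterpretation.

Local Open Scope R_scope.

Section Scaling.
Variables (NC NR : Type) (T1 T2 : finType) (I1 : interp NC NR T1) (I2 : interp NC NR T2)
  (n : nat).
Hypothesis n_gt0 : (0 < n)%N.

Lemma ratio_scaled (C D : concept NC NR) :
  card_ext I2 (CAnd C D) = (card_ext I1 (CAnd C D) * n)%N ->
  card_ext I2 D = (card_ext I1 D * n)%N ->
  ratio I2 C D = ratio I1 C D.
Proof.
rewrite /ratio => -> ->; rewrite !mult_INR.
case: (card_ext I1 D) => [|b]; first by rewrite /= Rmult_0_l !Rdiv_0_r.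
have Hn : INR n <> 0 by apply: not_0_INR; case: n n_gt0.
have Hb : INR b.+1 <> 0 by apply: not_0_INR.
by field.
Qed.

Lemma sat_scaled (k : cond NC NR) :
  card_ext I2 (CAnd (ccon k) (cpre k)) = (card_ext I1 (CAnd (ccon k) (cpre k)) * n)%N ->
  card_ext I2 (cpre k) = (card_ext I1 (cpre k) * n)%N ->
  sat I2 k <-> sat I1 k.
Proof.
move=> HCD HD; rewrite /sat (ratio_scaled HCD HD) HD.
have : (card_ext I1 (cpre k) * n)%N = 0%N <-> card_ext I1 (cpre k) = 0%N.
  by split => [/eqP|->//]; rewrite muln_eq0 (negbTE (lt0n_neq0 n_gt0)) orbF => /eqP.
tauto.
Qed.

End Scaling.

Section Relevance.
Variables (NC NR : Type) (K : list (cond NC NR)) (S : list (NC + NR)).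

Definition relevant_sym (s : NC + NR) : Prop :=
  In s S \/ exists k, relevant K S k /\ In s (csig k).

Lemma irrelevant_sym (k : cond NC NR) : In k K -> ~ relevant K S k ->
  forall s, In s (csig k) -> ~ relevant_sym s.
Proof.
move=> Hk Hnrel s Hs [HsS|[k' [[Hk' Hconn'] Hs']]]; apply: Hnrel; split => //.
- by apply: conn_base => //; exists s.
- by apply: (conn_step (k' := k')) => //; exists s.
Qed.

Lemma is_model_relevant (T : finType) (I : interp NC NR T) :
  is_model (KB_pred K) I -> is_model (relevant K S) I.
Proof. by move=> [HT HI]; split => // k [Hk _]; apply: HI. Qed.

Lemma is_model_prod_interp (T1 T2 : finType) (I : interp NC NR T1) (J : interp NC NR T2) :
  is_model (relevant K S) I -> is_model (KB_pred K) J ->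
  is_model (KB_pred K) (prod_interp relevant_sym I J).
Proof.
move=> [HT1 HI] [HT2 HJ]; split; first by rewrite card_prod muln_gt0 HT1 HT2.
move=> k Hk; have Hsig s : In s (Sig (cpre k)) -> In s (csig k).
  by move=> Hs; apply: in_or_app; right.
have [Hrel|Hnrel] := classic (relevant K S k).
- have Hsym s : In s (csig k) -> relevant_sym s by move=> Hs; right; exists k.
  have HCD := card_ext_prod_interp_l I J (X := CAnd (ccon k) (cpre k)) Hsym.
  have HD := card_ext_prod_interp_l I J (fun s Hs => Hsym s (Hsig s Hs)).
  exact/(sat_scaled HT2 HCD HD)/HI.
- have Hsym := irrelevant_sym Hk Hnrel.
  have HCD := card_ext_prod_interp_r I J (X := CAnd (ccon k) (cpre k)) Hsym.
  have HD := card_ext_prod_interp_r I J (fun s Hs => Hsym s (Hsig s Hs)).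
  exact/(sat_scaled HT1 HCD HD)/HJ.
Qed.

End Relevance.

Section Extension.
Variables (NC NR : Type) (K : list (cond NC NR)) (C D : concept NC NR).
Hypothesis consK : consistent K.

Let S := Sig C ++ Sig D.

Lemma relevant_model_extends (T : finType) (I : interp NC NR T) :
  is_model (relevant K S) I ->
  exists (T' : finType) (I' : interp NC NR T'), [/\ is_model (KB_pred K) I',
    forall l u, sat I' (Cond C D l u) <-> sat I (Cond C D l u),
    (0 < card_ext I' D)%N = (0 < card_ext I D)%N & ratio I' C D = ratio I C D].
Proof.
move=> HI; have [T2 [J HJ]] := consK.
have HT2 : (0 < #|T2|)%N by case: HJ.
have HCD : card_ext (prod_interp (relevant_sym K S) I J) (CAnd C D)
           = (card_ext I (CAnd C D) * #|T2|)%N.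
  by apply: card_ext_prod_interp_l => s Hs; left.
have HD : card_ext (prod_interp (relevant_sym K S) I J) D = (card_ext I D * #|T2|)%N.
  by apply: card_ext_prod_interp_l => s Hs; left; apply: in_or_app; right.
exists _, (prod_interp (relevant_sym K S) I J); split.
- exact: is_model_prod_interp.
- by move=> l u; apply: (sat_scaled HT2 (k := Cond C D l u) HCD HD).
- by rewrite HD muln_gt0 HT2 andbT.
- exact: (ratio_scaled HT2 HCD HD).
Qed.

Lemma ratios_relevant (r : R) : ratios (KB_pred K) C D r <-> ratios (relevant K S) C D r.
Proof.
split => [[T [I [HI [HD ->]]]]|[T [I [HI [HD ->]]]]].
- by exists T, I; split; first exact: is_model_relevant.
- have [T' [I' [HI' _ HD' Hr']]] := relevant_model_extends HI.
  by exists T', I'; rewrite HD' Hr'.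
Qed.

End Extension.

Lemma entails_p_ratios (NC NR : Type) (P Q : cond NC NR -> Prop) (C D : concept NC NR)
  (m M : R) : (forall r, ratios P C D r <-> ratios Q C D r) ->
  entails_p P C D m M -> entails_p Q C D m M.
Proof.
move=> HPQ [[T [I [HI HD]]] [[Hm_lb Hm_glb] [HM_ub HM_sup]]].
have [|T' [I' [HI' [HD' _]]]] := proj1 (HPQ (ratio I C D)); first by exists T, I.
split; first by exists T', I'.
split; split.
- by move=> x /HPQ; apply: Hm_lb.
- by move=> b Hb; apply: Hm_glb => x /HPQ; apply: Hb.
- by move=> x /HPQ; apply: HM_ub.
- by move=> b Hb; apply: HM_sup => x /HPQ; apply: Hb.
Qed.

Theorem proposition4 (NC NR : Type) (K : list (cond NC NR))
  (wfK : forall k, In k K -> wf_cond k)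
  (consK : consistent K) (C D : concept NC NR) :
  (forall l u : Q, Qle 0 l -> Qle l u -> Qle u 1 ->
     (entails_l (KB_pred K) (Cond C D l u) <->
      entails_l (relevant K (Sig C ++ Sig D)) (Cond C D l u))) /\
  (forall m M : R,
     (entails_p (KB_pred K) C D m M <->
      entails_p (relevant K (Sig C ++ Sig D)) C D m M)).
Proof.
split.
- move=> l u _ _ _; split => Hent T I HI.
  + have [T' [I' [HI' Hsat _ _]]] := relevant_model_extends (C := C) (D := D) consK HI.
    by apply/Hsat; apply: Hent.
  + by apply: Hent; apply: is_model_relevant.
- move=> m M; split; apply: entails_p_ratios => r; have := ratios_relevant C D consK r; tauto.
Qed.
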